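(* Let $\sigma$ be a proper partial action of a locally compact Hausdorff group $G$ on a locally compact Hausdorff space $X$. Then the closure $E_\sigma$ of $C_c(X)$ in $E_{\sigma^e}$ equals the closure in $E_{\sigma^e}$ of $E^0_\sigma:=C_c(X^e)\cap C_0(X)$.
   Context: A topological partial action $\sigma=(\{X_t\},\{\sigma_t\})$: open $X_t\subseteq X$, homeomorphisms $\sigma_t\colon X_{t^{-1}}\to X_t$, $X_e=X$, $\sigma_e=\mathrm{id}$, $\sigma_s(X_{s^{-1}}\cap X_t)=X_s\cap X_{st}$, $\sigma_s\sigma_t=\sigma_{st}$ on $X_{t^{-1}}\cap X_{t^{-1}s^{-1}}$, $\Gamma_\sigma=\{(t,x):x\in X_{t^{-1}}\}$ open and $(t,x)\mapsto\sigma_t(x)$ continuous; proper means $(t,x)\mapsto(\sigma_t(x),x)$, $\Gamma_\sigma\to X\times X$, is proper. The enveloping action $\sigma^e$ on $X^e$ is the global action with $X$ open in $X^e$, $X_t=X\cap\sigma^e_t(X)$, $\sigma_t=\sigma^e_t|_{X_{t^{-1}}}$, $X^e=\bigcup_t\sigma^e_t(X)$; for proper $\sigma$, $X^e$ is locally compact Hausdorff and $\sigma^e$ is proper. $C_0(X)$ is viewed as an ideal of $C_0(X^e)$ (extension by zero), so $C_c(X)\subseteq C_c(X^e)\cap C_0(X)$. $X/\sigma\cong X^e/\sigma^e$ denotes the orbit space. $E_{\sigma^e}$ is the completion of $C_c(X^e)$ as a left Hilbert $C_0(X/\sigma)$-module with $(fg)(x)=f([x])g(x)$ and $\langle g,h\rangle([x])=\int_G(g\bar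 h)(\sigma^e_{t^{-1}}(x))\,dt$ (Haar measure $dt$). *)

From HB Require Import structures.
From mathcomp Require Import all_boot all_order all_algebra.
From mathcomp Require Import all_classical all_reals all_analysis.
From mathcomp Require Import complex.
Import Order.TTheory GRing.Theory Num.Theory.
Import numFieldTopology.Exports numFieldNormedType.Exports.

Set Implicit Arguments.
Unset Strict Implicit.
Unset Printing Implicit Defensive.

Local Open Scope classical_set_scope.
Local Open Scope ring_scope.

Definition Cplx (R : realType) := (R[i])^o.

Definition is_topgroup (G : topologicalType) (mul : G -> G -> G) (inv : G -> G)
  (one : G) : Prop :=
  [/\ (forall a b c, mul a (mul b c) = mul (mul a b) c),
      (forall a, (mul one a = a) /\ (mul a one = a)),
      (forall a, (mul (inv a) a = one) /\ (mul a (inv a) = one)),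
      continuous (fun p : G * G => mul p.1 p.2) &
      continuous inv].

Definition borelG (G : ptopologicalType) := g_sigma_algebraType (@open G).

Definition is_left_Haar (R : realType) (G : ptopologicalType)
  (mul : G -> G -> G) (mu : {measure set (borelG G) -> \bar R}) : Prop :=
  [/\ (forall (g : G) (A : set (borelG G)), measurable A ->
          mu [set mul g a | a in A] = mu A),
      (forall K : set G, compact K -> (mu K < +oo)%E),
      (forall A : set (borelG G), measurable A ->
          mu A = ereal_inf [set mu U | U in [set U : set G | open U /\ A `<=` U]]),
      (forall U : set G, open U ->
          mu U = ereal_sup [set mu K | K in [set K : set G | compact K /\ K `<=` U]]) &
      (0 < mu setT)%E].

Definition homeo_on (T U : topologicalType) (A : set T) (B : set U) (f : T -> U) :=
  [/\ (forall x, A x -> B (f x)),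
      (forall x y, A x -> A y -> f x = f y -> x = y),
      (forall y, B y -> exists2 x, A x & f x = y),
      {within A, continuous f} &
      exists g : U -> T, (forall y, B y -> A (g y) /\ f (g y) = y) /\
                         {within B, continuous g}].

Definition Gamma_dom (G X : Type) (inv : G -> G) (D : G -> set X) : set (G * X) :=
  [set p | D (inv p.1) p.2].

(* sigma = ({X_t} = D, {sigma_t} = s) is a topological partial action of G on X. *)
Definition is_partial_action (G X : topologicalType) (mul : G -> G -> G)
  (inv : G -> G) (one : G) (D : G -> set X) (s : G -> X -> X) : Prop :=
  [/\ (forall t, open (D t)) /\ (forall t, homeo_on (D (inv t)) (D t) (s t)),
      (D one = setT /\ (forall x, s one x = x)),
      (forall t u, s t @` (D (inv t) `&` D u) = D t `&` D (mul t u)),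
      (forall t u x, D (inv u) x -> D (inv (mul t u)) x ->
          s t (s u x) = s (mul t u) x) &
      (open (Gamma_dom inv D) /\
      {within Gamma_dom inv D, continuous (fun p : G * X => s p.1 p.2)})].

Definition proper_partial_action (G X : topologicalType) (inv : G -> G)
  (D : G -> set X) (s : G -> X -> X) : Prop :=
  forall K : set (X * X), compact K ->
    compact (Gamma_dom inv D `&` [set p | K (s p.1 p.2, p.2)]).

Definition is_global_action (G Y : topologicalType) (mul : G -> G -> G)
  (one : G) (th : G -> Y -> Y) : Prop :=
  [/\ (forall y, th one y = y),
      (forall t u y, th t (th u y) = th (mul t u) y) &
      continuous (fun p : G * Y => th p.1 p.2)].

Definition open_embedding (X Y : topologicalType) (iota : X -> Y) : Prop :=
  [/\ injective iota, continuous iota &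
      forall U : set X, open U -> open (iota @` U)].

Definition is_enveloping_action (G X Y : topologicalType) (mul : G -> G -> G)
  (inv : G -> G) (one : G) (D : G -> set X) (s : G -> X -> X)
  (th : G -> Y -> Y) (iota : X -> Y) : Prop :=
  [/\ is_global_action mul one th,
      open_embedding iota,
      (forall t, iota @` D t = range iota `&` th t @` range iota),
      (forall t x, D (inv t) x -> iota (s t x) = th t (iota x)) &
      (forall y, exists t, (th t @` range iota) y)].

Section functions.
Variable R : realType.

Definition Cc (T : topologicalType) (f : T -> Cplx R) : Prop :=
  continuous f /\ compact (closure [set x | f x != 0]).

Definition C0 (T : topologicalType) (f : T -> Cplx R) : Prop :=
  continuous f /\
  forall e : R, 0 < e -> exists2 K : set T, compact K &
    forall x, ~ K x -> Normc.normc (f x : R[i]) < e.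

Definition ext_by_zero (X Y : Type) (iota : X -> Y) (f : X -> Cplx R)
  (g : Y -> Cplx R) : Prop :=
  (forall x, g (iota x) = f x) /\ (forall y, ~ range iota y -> g y = 0).

Definition CcX_in (X Y : topologicalType) (iota : X -> Y) (g : Y -> Cplx R) :=
  exists2 f : X -> Cplx R, Cc f & ext_by_zero iota f g.

Definition E0 (X Y : topologicalType) (iota : X -> Y) (g : Y -> Cplx R) :=
  Cc g /\ exists2 f : X -> Cplx R, C0 f & ext_by_zero iota f g.

(* ||g||^2 in E_{sigma^e} for g in C_c(X^e):
   || <g,g> ||_oo = sup_{[y]} int_G |g(th_{t^-1} y)|^2 dt. *)
Definition Enorm2 (G : ptopologicalType) (Y : topologicalType) (inv : G -> G)
  (mu : {measure set (borelG G) -> \bar R}) (th : G -> Y -> Y)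
  (g : Y -> Cplx R) : \bar R :=
  ereal_sup (range (fun y : Y =>
    (\int[mu]_(t in setT) ((Normc.normc (g (th (inv t) y) : R[i])) ^+ 2)%:E)%E)).

Definition in_Eclosure (G : ptopologicalType) (Y : topologicalType) (inv : G -> G)
  (mu : {measure set (borelG G) -> \bar R}) (th : G -> Y -> Y)
  (S : (Y -> Cplx R) -> Prop) (g : Y -> Cplx R) : Prop :=
  forall e : R, 0 < e -> exists2 h, S h & (Enorm2 inv mu th (fun y => (g y - h y)%R) < e%:E)%E.

End functions.

From HB Require Import structures.
From mathcomp Require Import all_boot all_order all_algebra.
From mathcomp Require Import all_classical all_reals all_analysis.
From mathcomp Require Import complex lra measurable_realfun.
Import numFieldTopology.Exports numFieldNormedType.Exports.
Import Order.TTheory GRing.Theory Num.Theory.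
Local Open Scope classical_set_scope.
Local Open Scope ring_scope.
Set Implicit Arguments.
Unset Strict Implicit.
Unset Printing Implicit Defensive.

(* Properness of the partial action makes iota(K) closed in X^e for every
   compact K in X, so the extension by zero of f in C_c(X) is continuous with
   compact support, and it is C_0 on X: C_c(X) lies in E^0_sigma.
   Conversely, for h in E^0_sigma and c > 0, k := h * cutoff_c(|h|) vanishes
   where |h| < c, and {|h| >= c} meets X in a compact set since h is C_0 on X,
   so k is in C_c(X).  Moreover |h - k| <= 2c and h - k is supported in the
   compact set L = supp h.  Properness also bounds the Haar measure of the sets
   {t | sigma^e_{t^-1}(y) in L} by some B independent of y, whence
   ||g - k||^2 <= 2 ||g - h||^2 + 8 c^2 B, small when ||g - h|| and c are. *)

Section complex_modulus.
Variable R : realType.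
Local Notation nc := (@Normc.normc R).
Local Open Scope complex_scope.

Lemma norm_CplxE (z : Cplx R) : `|z| = (nc z)%:C.
Proof. by []. Qed.

Lemma normc_ge0 (z : Cplx R) : 0 <= nc z.
Proof. by case: z => x y; rewrite /Normc.normc sqrtr_ge0. Qed.

Lemma normc_real (r : R) : nc r%:C = `|r|.
Proof. by rewrite /Normc.normc /= expr0n /= addr0 sqrtr_sqr. Qed.

Lemma ler_normc_dist (a b : Cplx R) : `|nc a - nc b| <= nc (a - b).
Proof.
have hab : nc a <= nc (a - b) + nc b by rewrite -{1}(subrK b a) le_normcD.
have hba : nc b <= nc (a - b) + nc a.
  rewrite -{1}(subrK a b); apply: le_trans (le_normcD _ _) _.
  by rewrite -[nc (b - a)]normcN opprB.
rewrite ler_norml; apply/andP; split; lra.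
Qed.

Lemma sqr_normcD_le (a b : Cplx R) :
  nc (a + b) ^+ 2 <= 2 * nc a ^+ 2 + 2 * nc b ^+ 2.
Proof.
have := le_normcD a b; have := normc_ge0 (a + b).
have := normc_ge0 a; have := normc_ge0 b; have := sqr_ge0 (nc a - nc b).
nra.
Qed.

Lemma cvgCplxP (T : Type) (F : set_system T) {FF : Filter F}
    (f : T -> Cplx R) (a : Cplx R) :
  f @ F --> a <-> forall e : R, 0 < e -> \forall t \near F, nc (a - f t) < e.
Proof.
rewrite cvgrPdist_lt; split.
  move=> H e e0; have := H e%:C; rewrite ltcR => /(_ e0).
  by apply: filterS => t; rewrite norm_CplxE ltcR.
move=> H eps; rewrite ltcE /= => /andP[/eqP Ie Re0].
by apply: filterS (H _ Re0) => t ht; rewrite norm_CplxE ltcE /= -Ie eqxx ht.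
Qed.

Lemma continuous_normc (T : topologicalType) (f : T -> Cplx R) x :
  {for x, continuous f} -> {for x, continuous (fun y => nc (f y))}.
Proof.
move=> /cvgCplxP fx; apply/cvgrPdist_lt => e e0.
by apply: filterS (fx e e0) => y; apply: le_lt_trans; exact: ler_normc_dist.
Qed.

Lemma continuous_realC (T : topologicalType) (f : T -> R) x :
  {for x, continuous f} -> {for x, continuous (fun y => (f y)%:C : Cplx R)}.
Proof.
move=> /cvgrPdist_lt fx; apply/cvgCplxP => e e0.
by apply: filterS (fx e e0) => y; rewrite -rmorphB normc_real.
Qed.

End complex_modulus.

Section truncation.
Variable R : realType.
Local Notation nc := (@Normc.normc R).
Local Open Scope complex_scope.
Variable c : R.

Definition cutoff (r : R) : R := Num.min 1 (Num.max 0 (r / c - 1)).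

Definition truncate (T : Type) (h : T -> Cplx R) (y : T) : Cplx R :=
  h y * (cutoff (nc (h y)))%:C.

Lemma cutoff_ge0 r : 0 <= cutoff r.
Proof. by rewrite /cutoff le_min ler01 le_max lexx. Qed.

Lemma cutoff_le1 r : cutoff r <= 1.
Proof. by rewrite /cutoff ge_min lexx. Qed.

Lemma continuous_cutoff : continuous cutoff.
Proof.
move=> r; apply: (@continuous_min R R (fun=> 1) (fun r => Num.max 0 (r / c - 1))).
  exact: cvg_cst.
apply: (@continuous_max R R (fun=> 0) (fun r => r / c - 1)); first exact: cvg_cst.
by apply: cvgB; [apply: cvgM; [exact: cvg_id | exact: cvg_cst] | exact: cvg_cst].
Qed.

Lemma continuous_truncate (T : topologicalType) (h : T -> Cplx R) :
  continuous h -> continuous (truncate h).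
Proof.
move=> ch x; apply: (cvgM (ch x)).
apply: (continuous_realC (f := fun y => cutoff (nc (h y)))).
apply: (@continuous_comp _ _ _ (fun y => nc (h y)) cutoff).
  exact: (continuous_normc (ch x)).
exact: continuous_cutoff.
Qed.

Hypothesis c0 : 0 < c.

Lemma cutoff_small r : r < c -> cutoff r = 0.
Proof.
move=> rc; have : r / c - 1 < 0 by rewrite subr_lt0 ltr_pdivrMr // mul1r.
by move=> neg; rewrite /cutoff (max_idPl (ltW neg)) (min_idPr ler01).
Qed.

Lemma cutoff_large r : 2 * c <= r -> cutoff r = 1.
Proof.
move=> rc; have one_le : 1 <= r / c - 1 by rewrite lerBrDr ler_pdivlMr.
by rewrite /cutoff (max_idPr (le_trans ler01 one_le)) (min_idPl one_le).
Qed.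

Lemma truncate_small (T : Type) (h : T -> Cplx R) y :
  nc (h y) < c -> truncate h y = 0.
Proof. by move=> small; rewrite /truncate cutoff_small // mulr0. Qed.

Lemma normc_sub_truncate (T : Type) (h : T -> Cplx R) y :
  nc (h y - truncate h y) <= 2 * c.
Proof.
rewrite /truncate -{1}[h y]mulr1 -mulrBr -[1 - _]rmorphB /= Normc.normcM normc_real.
have [large|small] := leP (2 * c) (nc (h y)).
  by rewrite cutoff_large // subrr normr0 mulr0 mulr_ge0 // ltW.
rewrite ger0_norm ?subr_ge0 ?cutoff_le1 //; apply: le_trans (ltW small).
by rewrite ler_piMr ?normc_ge0 // lerBlDr lerDl cutoff_ge0.
Qed.

Lemma sqr_normc_sub_truncate_le (T : Type) (g h : T -> Cplx R) z (i : R) :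
  0 <= i -> (h z != 0 -> i = 1) ->
  nc (g z - truncate h z) ^+ 2 <= 2 * nc (g z - h z) ^+ 2 + 8 * c ^+ 2 * i.
Proof.
move=> i0 hz_i.
have -> : g z - truncate h z = (g z - h z) + (h z - truncate h z).
  by rewrite addrA subrK.
apply: le_trans (sqr_normcD_le _ _) _; rewrite lerD2l.
have [hz0|/hz_i ->] := eqVneq (h z) 0.
  rewrite /truncate hz0 mul0r subrr Normc.normc0 expr0n mulr0.
  by rewrite mulr_ge0 ?mulr_ge0 ?(ltW c0).
have := normc_sub_truncate h z; have := normc_ge0 (h z - truncate h z).
nra.
Qed.

End truncation.

Section topology_lemmas.
Variable T : topologicalType.

Lemma locally_compact_nbhs : locally_compact [set: T] ->
  forall x : T, exists2 V, nbhs x V & compact V.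
Proof.
move=> lcT x; have [V xV [cV _]] := lcT x I.
by exists V => //; move: xV; rewrite withinET.
Qed.

Lemma closureI_nbhs (A N : set T) (x : T) :
  closure A x -> nbhs x N -> closure (A `&` N) x.
Proof.
move=> clAx Nx B Bx; have [z [Az [Nz Bz]]] := clAx _ (filterI Nx Bx).
by exists z.
Qed.

Lemma compact_local_ind (P : set T -> Prop) (L : set T) :
  (forall A B, A `<=` B -> P B -> P A) ->
  (forall A B, P A -> P B -> P (A `|` B)) -> P set0 -> compact L ->
  (forall x, L x -> exists2 U, nbhs x U & P U) -> P L.
Proof.
move=> PS PU P0 cL Ploc; apply: contrapT => nPL.
pose F := [set A : set T | P (L `\` A)].
have FF : Filter F.
  split.
  - by apply: PS P0 => y [_ /(_ I)].
  - move=> A B FA FB; apply: PS (PU _ _ FA FB) => y [Ly nAB].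
    case: (pselect (A y)) => Ay; last by left.
    by right; split => // By; apply: nAB.
  - by move=> A B AB; apply: PS => y [Ly nB]; split => // /AB.
have PF : ProperFilter F.
  apply: Build_ProperFilter => // F0; apply: nPL.
  by apply: PS F0 => z Lz; split.
have FL : F L by apply: PS P0 => z [].
have [x [Lx clx]] := cL F PF FL.
have [U Ux PU'] := Ploc x Lx.
have FnU : F (~` U) by apply: PS PU' => z [_ /contrapT].
by have [z [nUz Uz]] := clx _ _ FnU Ux.
Qed.

Lemma continuous_partial_l (U V : topologicalType) (f : U -> V -> T) (a : U) :
  continuous (fun p : U * V => f p.1 p.2) -> continuous (f a).
Proof.
move=> cf x; apply: (@continuous_comp _ _ _ (pair a) (fun p => f p.1 p.2)).
  by apply: cvg_pair; [exact: cvg_cst | exact: cvg_id].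
exact: cf.
Qed.

Lemma continuous_partial_r (U V : topologicalType) (f : U -> V -> T) (b : V) :
  continuous (fun p : U * V => f p.1 p.2) -> continuous (f^~ b).
Proof.
move=> cf x; apply: (@continuous_comp _ _ _ (pair^~ b) (fun p => f p.1 p.2)).
  by apply: cvg_pair; [exact: cvg_id | exact: cvg_cst].
exact: cf.
Qed.

End topology_lemmas.

Section topological_group.
Variables (G : topologicalType) (mul : G -> G -> G) (inv : G -> G) (one : G).
Hypothesis Hg : is_topgroup mul inv one.

Lemma tg_mulA a b c : mul a (mul b c) = mul (mul a b) c.
Proof. by case: Hg => mulA _ _ _ _; apply: mulA. Qed.

Lemma tg_mul1g a : mul one a = a.
Proof. by case: Hg => _ mul1 _ _ _; case: (mul1 a). Qed.

Lemma tg_mulg1 a : mul a one = a.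
Proof. by case: Hg => _ mul1 _ _ _; case: (mul1 a). Qed.

Lemma tg_mulVg a : mul (inv a) a = one.
Proof. by case: Hg => _ _ mulV _ _; case: (mulV a). Qed.

Lemma tg_mulgV a : mul a (inv a) = one.
Proof. by case: Hg => _ _ mulV _ _; case: (mulV a). Qed.

Lemma tg_mulKVg a b : mul a (mul (inv a) b) = b.
Proof. by rewrite tg_mulA tg_mulgV tg_mul1g. Qed.

Lemma continuous_tg_inv : continuous inv.
Proof. by case: Hg. Qed.

Lemma continuous_tg_mull a : continuous (mul a).
Proof. by apply: continuous_partial_l; case: Hg. Qed.

Lemma continuous_tg_mulr a : continuous (mul^~ a).
Proof. by apply: continuous_partial_r; case: Hg. Qed.

End topological_group.

Section global_action.
Variables (G Y : topologicalType) (mul : G -> G -> G) (inv : G -> G) (one : G).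
Variable th : G -> Y -> Y.
Hypotheses (Hg : is_topgroup mul inv one) (Ha : is_global_action mul one th).

Lemma act1 y : th one y = y.
Proof. by case: Ha. Qed.

Lemma actM t u y : th t (th u y) = th (mul t u) y.
Proof. by case: Ha => _ thM _; apply: thM. Qed.

Lemma actK t : cancel (th t) (th (inv t)).
Proof. by move=> y; rewrite actM (tg_mulVg Hg) act1. Qed.

Lemma actVK t : cancel (th (inv t)) (th t).
Proof. by move=> y; rewrite actM (tg_mulgV Hg) act1. Qed.

Lemma continuous_act t : continuous (th t).
Proof. by apply: continuous_partial_l; case: Ha. Qed.

Lemma continuous_orbit_inv (y : Y) : continuous (fun t => th (inv t) y).
Proof.
move=> t; apply: (@continuous_comp _ _ _ inv (th^~ y)).
  exact: (continuous_tg_inv Hg).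
by apply: continuous_partial_r; case: Ha.
Qed.

Lemma open_act_image t (U : set Y) : open U -> open (th t @` U).
Proof.
have -> : th t @` U = th (inv t) @^-1` U.
  apply/seteqP; split => [_ [z Uz <-]|y Uy] /=; first by rewrite actK.
  by exists (th (inv t) y) => //; rewrite actVK.
by move: (continuous_act (t := inv t)) => /continuousP; apply.
Qed.

End global_action.

Section enveloping_action.
Variables (G X Y : topologicalType) (mul : G -> G -> G) (inv : G -> G) (one : G).
Variables (D : G -> set X) (s : G -> X -> X) (th : G -> Y -> Y) (iota : X -> Y).
Hypotheses (Hg : is_topgroup mul inv one) (Hpa : is_partial_action mul inv one D s).
Hypothesis He : is_enveloping_action mul inv one D s th iota.

Let Ha : is_global_action mul one th. Proof. by case: He. Qed.
Let Hemb : open_embedding iota. Proof. by case: He. Qed.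

Lemma iota_inj : injective iota.
Proof. by case: Hemb. Qed.

Lemma continuous_iota : continuous iota.
Proof. by case: Hemb. Qed.

Lemma open_iota_image (U : set X) : open U -> open (iota @` U).
Proof. by case: Hemb => _ _; apply. Qed.

Lemma iota_act t x : D (inv t) x -> iota (s t x) = th t (iota x).
Proof. by case: He => _ _ _ sE _; apply: sE. Qed.

Lemma act_iota_cover y : exists t, (th t @` range iota) y.
Proof. by case: He. Qed.

Lemma iota_eq_act b u v : iota u = th b (iota v) -> D (inv b) v /\ s b v = u.
Proof.
move=> e; have : (iota @` D b) (iota u).
  by case: He => _ _ -> _ _; split; [exists u | exists (iota v) => //; exists v].
case=> u' Du /iota_inj eu; subst u'.
case: Hpa => [[_ /(_ b) [_ _ s_onto _ _]] _ _ _ _].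
have [w Dw sw] := s_onto u Du.
suff wv : w = v by rewrite -wv.
by apply/iota_inj/(can_inj (actK Hg Ha b)); rewrite -iota_act // sw.
Qed.

Lemma nbhs_act_iota_image a x (U : set X) :
  nbhs x U -> nbhs (th a (iota x)) (th a @` (iota @` U)).
Proof.
rewrite nbhsE => -[V [oV Vx] VU].
apply: (@filterS _ _ _ (th a @` (iota @` V))).
  by move=> _ [_ [v Vv <-] <-]; exists (iota v) => //; exists v => //; exact: VU.
apply: open_nbhs_nbhs; split; last by exists (iota x) => //; exists x.
by apply: (open_act_image Hg Ha); exact: open_iota_image.
Qed.

Hypotheses (HG : hausdorff_space G) (HX : hausdorff_space X).
Hypothesis HLC : locally_compact [set: X].
Hypothesis Hpr : proper_partial_action inv D s.

Lemma compact_proper_slice (b : G) (K V : set X) : compact K -> compact V ->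
  compact ([set v | D (inv b) v /\ K (s b v)] `&` V).
Proof.
move=> cK cV.
pose P := Gamma_dom inv D `&` [set p | (K `*` V) (s p.1 p.2, p.2)].
have cPb : compact (P `&` [set p | p.1 = b]).
  apply: compact_closedI; first by apply: Hpr; exact: compact_setX.
  apply: (@preimage_closed _ _ fst [set b]); first by move=> p _; exact: cvg_fst.
  exact: accessible_closed_set1 (hausdorff_accessible HG) b.
have -> : [set v | D (inv b) v /\ K (s b v)] `&` V =
    snd @` (P `&` [set p | p.1 = b]).
  apply/seteqP; split => [v [[Dv Kv] Vv]|_ [[t v] [[/= Dv [Kv Vv]] /= tb] <-]].
    by exists (b, v).
  by subst t.
by apply: continuous_compact cPb; apply: continuous_subspaceT => p; exact: cvg_snd.
Qed.

Lemma compact_return_times (K : set X) : compact K ->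
  exists2 C : set G, compact C &
    forall b k k', K k -> K k' -> iota k' = th b (iota k) -> C b.
Proof.
move=> cK; exists (fst @` (Gamma_dom inv D `&` [set p | (K `*` K) (s p.1 p.2, p.2)])).
  apply: continuous_compact; last by apply: Hpr; exact: compact_setX.
  by apply: continuous_subspaceT => p; exact: cvg_fst.
move=> b k k' Kk Kk' e; have [Dk skk'] := iota_eq_act e.
by exists (b, k) => //; split => //=; rewrite skk'.
Qed.

Lemma closed_iota_image (K : set X) : compact K -> closed (iota @` K).
Proof.
move=> cK y clKy.
have [b [_ [x _ <-] yE]] := act_iota_cover y; rewrite -{}yE in clKy *.
(* The points of X near x sent into K by sigma_b accumulate at x; near x they
   form a compact, hence closed, set by properness. *)
pose Q := [set v | D (inv b) v /\ K (s b v)].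
have clQx : closure Q x.
  move=> B Bx; have [_ [[u Ku <-] [_ [v Bv <-] e]]] :=
    clKy _ (nbhs_act_iota_image b Bx).
  have [Dv svu] := iota_eq_act (esym e).
  by exists v; split => //; split => //; rewrite svu.
have [V Vx cV] := locally_compact_nbhs HLC x.
have [[Dx Ksx] _] := compact_closed HX (compact_proper_slice (b := b) cK cV)
  (closureI_nbhs clQx Vx).
by exists (s b x) => //; exact: iota_act.
Qed.

Variable R : realType.

Lemma ext_by_zero_support (f : X -> Cplx R) (h : Y -> Cplx R) :
  ext_by_zero iota f h -> [set y | h y != 0] `<=` iota @` closure [set x | f x != 0].
Proof.
move=> [hf h0] y /=; case: (pselect (range iota y)) => [[x _ <-]|ny].
  by rewrite hf => fx; exists x => //; exact: subset_closure.
by rewrite h0 ?eqxx.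
Qed.

Lemma continuous_ext_by_zero (f : X -> Cplx R) (h : Y -> Cplx R) :
  Cc f -> ext_by_zero iota f h -> continuous h.
Proof.
move=> [cf cK] hext y; have [hf h0] := hext.
case: (pselect (range iota y)) => [[x _ <-]|ny].
  move=> W; rewrite hf => /cf; rewrite nbhsE => -[U [oU Ux] UW].
  apply: (@filterS _ _ _ (iota @` U)).
    by move=> _ [u Uu <-] /=; rewrite hf; exact: UW.
  by apply: open_nbhs_nbhs; split; [exact: open_iota_image | exists x].
move=> W; rewrite h0 // => W0.
apply: (@filterS _ _ _ (~` (iota @` closure [set x | f x != 0]))).
  move=> z nKz /=; suff -> : h z = 0 by exact: nbhs_singleton.
  by apply: contrapT => /eqP /(ext_by_zero_support hext).
apply: open_nbhs_nbhs; split; first exact/closed_openC/closed_iota_image.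
by move=> [x _ ex]; apply: ny; exists x.
Qed.

Lemma CcX_in_E0 (h : Y -> Cplx R) : CcX_in iota h -> E0 iota h.
Proof.
case=> f [cf cK] hext; split; last first.
  exists f => //; split => // e e0; exists (closure [set x | f x != 0]) => // x nKx.
  suff -> : f x = 0 by rewrite Normc.normc0.
  by apply: contrapT => /eqP fx; apply: nKx; exact: subset_closure.
split; first exact: (continuous_ext_by_zero (conj cf cK)).
have cKY : compact (iota @` closure [set x | f x != 0]).
  by apply: continuous_compact cK; apply: continuous_subspaceT; exact: continuous_iota.
apply: (subclosed_compact (@closed_closure _ _) cKY).
rewrite [X in _ `<=` X](closure_id _).1; last exact: closed_iota_image.
by apply: closureS; exact: ext_by_zero_support.
Qed.

Lemma truncate_CcX (c : R) (h : Y -> Cplx R) : 0 < c -> E0 iota h ->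
  CcX_in iota (truncate c h).
Proof.
move=> c0 [_ [f [cf f0] [hf h0]]].
exists (truncate c f); last by split => [x|y ny]; rewrite /truncate ?hf ?h0 ?mul0r.
split; first exact: continuous_truncate.
have [K cK hK] := f0 c c0.
apply: (subclosed_compact (@closed_closure _ _) cK).
have closed_large : closed [set x | c <= Normc.normc (f x)].
  apply: (@preimage_closed _ _ (fun x => Normc.normc (f x)) [set r | c <= r]).
    by move=> x _; apply: continuous_normc; exact: cf.
  exact: closed_ge.
apply: (@subset_trans _ [set x | c <= Normc.normc (f x)]).
  rewrite [X in _ `<=` X](closure_id _).1 //; apply: closureS => x /=.
  by case: (leP c (Normc.normc (f x))) => // small; rewrite truncate_small ?eqxx.
by move=> x cfx; apply: contrapT => /hK; rewrite ltNge cfx.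
Qed.

End enveloping_action.

Section borel_sets.
Variable G : ptopologicalType.

Lemma borelG_open (A : set G) : open A -> measurable (A : set (borelG G)).
Proof. by move=> oA; apply: sub_sigma_algebra. Qed.

Lemma borelG_compact (A : set G) : hausdorff_space G -> compact A ->
  measurable (A : set (borelG G)).
Proof.
move=> HG /(compact_closed HG) cA; rewrite -[A]setCK; apply: measurableC.
by apply: borelG_open; exact: closed_openC.
Qed.

Lemma borelG_measurable_fun (R : realType) (phi : G -> R) : continuous phi ->
  measurable_fun setT (phi : borelG G -> R).
Proof.
move=> cphi; apply: (measurability _ (RGenOpens.measurableE R)).
move=> _ [_ [a [b ->]] <-]; rewrite setTI; apply: borelG_open.
by move/continuousP: cphi; apply; exact: interval_open.
Qed.

End borel_sets.

Section integral_affine_bound.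
Local Open Scope ereal_scope.
Context d (T : measurableType d) (R : realType) (mu : {measure set T -> \bar R}).

Lemma integral_le_affine_indic (f a : T -> R) (M : set T) (k b : R) :
  measurable M -> (0 <= k)%R -> (0 <= b)%R ->
  measurable_fun setT f -> measurable_fun setT a ->
  (forall t, 0 <= f t)%R -> (forall t, 0 <= a t)%R ->
  (forall t, f t <= k * a t + b * \1_M t)%R ->
  \int[mu]_(t in setT) (f t)%:E <=
    k%:E * \int[mu]_(t in setT) (a t)%:E + b%:E * mu M.
Proof.
move=> mM k0 b0 mf ma f0 a0 fle.
have mI : measurable_fun setT (\1_M : T -> R) := measurable_indic (D := setT) mM.
have ma' := (measurable_EFinP setT _).2 ma; have mI' := (measurable_EFinP setT _).2 mI.
have I0 t : (0 <= \1_M t)%R by rewrite /indic ler0n.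
apply: (@le_trans _ _ (\int[mu]_(t in setT) (k%:E * (a t)%:E + b%:E * (\1_M t)%:E))).
  apply: ge0_le_integral => //.
  - by move=> t _; rewrite lee_fin.
  - exact/measurable_EFinP.
  - by apply: emeasurable_funD; exact: measurable_funeM.
  - by move=> t _; rewrite -!EFinM -EFinD lee_fin.
rewrite ge0_integralD //; first last.
- exact: measurable_funeM.
- by move=> t _; rewrite mule_ge0 ?lee_fin.
- exact: measurable_funeM.
- by move=> t _; rewrite mule_ge0 ?lee_fin.
rewrite ge0_integralZl_EFin //; last by move=> t _; rewrite lee_fin.
by rewrite ge0_integralZl_EFin // ?integral_indic ?setIT // => t _; rewrite lee_fin.
Qed.

End integral_affine_bound.

Section haar_estimates.
Variables (G : ptopologicalType) (X Y : topologicalType).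
Variables (mul : G -> G -> G) (inv : G -> G) (one : G).
Variables (D : G -> set X) (s : G -> X -> X) (th : G -> Y -> Y) (iota : X -> Y).
Variables (R : realType) (mu : {measure set (borelG G) -> \bar R}).
Hypotheses (Hg : is_topgroup mul inv one) (Hpa : is_partial_action mul inv one D s).
Hypothesis He : is_enveloping_action mul inv one D s th iota.
Hypotheses (HG : hausdorff_space G) (HLC : locally_compact [set: X]).
Hypotheses (Hpr : proper_partial_action inv D s) (HH : is_left_Haar mul mu).
Local Notation nc := (@Normc.normc R).

Let Ha : is_global_action mul one th. Proof. by case: He. Qed.

Definition orbit_bounded_by (B : R) (L : set Y) := forall y, exists M : set (borelG G),
  [/\ measurable M, (mu M <= B%:E)%E & forall t, L (th (inv t) y) -> M t].

Definition orbit_bounded (L : set Y) := exists2 B : R, 0 <= B & orbit_bounded_by B L.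

Lemma orbit_bounded_byS B (L L' : set Y) :
  L `<=` L' -> orbit_bounded_by B L' -> orbit_bounded_by B L.
Proof.
by move=> sL hB y; have [M [mM muM hM]] := hB y; exists M; split => // t /sL /hM.
Qed.

Lemma orbit_boundedS (L L' : set Y) : L `<=` L' -> orbit_bounded L' -> orbit_bounded L.
Proof. by move=> sL [B B0 hB]; exists B => //; exact: orbit_bounded_byS hB. Qed.

Lemma orbit_bounded0 : orbit_bounded set0.
Proof. by exists 0 => // y; exists set0; split => //; rewrite measure0. Qed.

Lemma orbit_boundedU (L1 L2 : set Y) :
  orbit_bounded L1 -> orbit_bounded L2 -> orbit_bounded (L1 `|` L2).
Proof.
move=> [B1 B10 h1] [B2 B20 h2]; exists (B1 + B2); first exact: addr_ge0.
move=> y; have [M1 [m1 mu1 s1]] := h1 y; have [M2 [m2 mu2 s2]] := h2 y.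
exists (M1 `|` M2); split; first exact: measurableU.
  by apply: le_trans (measureU2 _ m1 m2) _; rewrite EFinD; exact: leeD.
by move=> t [/s1|/s2]; [left|right].
Qed.

(* If sigma^e_{t^-1} y and sigma^e_{t0^-1} y both lie in sigma^e_a(K), then
   a^-1 t0^-1 t a is a return time of K, so t lies in a left translate (by t0)
   of a compact set that does not depend on y. *)
Lemma orbit_bounded_act_image (a : G) (K : set X) : compact K ->
  orbit_bounded (th a @` (iota @` K)).
Proof.
move=> cK; have [C cC retC] := compact_return_times Hg Hpa He Hpr cK.
have [mu_translate mu_compact _ _ _] := HH.
pose C' := (fun b => mul (mul a b) (inv a)) @` C.
have cC' : compact C'.
  apply: continuous_compact cC; apply: continuous_subspaceT => b.
  apply: (@continuous_comp _ _ _ (mul a) (mul^~ (inv a))).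
    exact: (continuous_tg_mull Hg).
  exact: (continuous_tg_mulr Hg).
have C'_fin : mu C' \is a fin_num by rewrite ge0_fin_numE ?measure_ge0 ?mu_compact.
exists (fine (mu C')); first by rewrite fine_ge0.
move=> y; have [[t0 [_ [k0 Kk0 <-] e0]]|nret] :=
  pselect (exists t0, (th a @` (iota @` K)) (th (inv t0) y)); last first.
  exists set0; split => //; first by rewrite measure0 lee_fin fine_ge0.
  by move=> t ht; apply: nret; exists t.
exists [set mul t0 b | b in C']; split.
- apply: (borelG_compact HG); apply: continuous_compact cC'.
  by apply: continuous_subspaceT; exact: (continuous_tg_mull Hg).
- by rewrite mu_translate ?fineK ?lexx //; exact: (borelG_compact HG).
move=> t [_ [k Kk <-] e]; pose b := mul (inv a) (mul (inv t0) (mul t a)).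
have Cb : C b.
  apply: (retC b k k0) => //.
  by rewrite /b -!(actM Ha) e (actVK Hg Ha) -e0 (actK Hg Ha).
exists (mul (mul a b) (inv a)); first by exists b.
rewrite /b (tg_mulKVg Hg) -(tg_mulA Hg) (tg_mulKVg Hg) -(tg_mulA Hg).
by rewrite (tg_mulgV Hg) (tg_mulg1 Hg).
Qed.

Lemma orbit_bounded_compact (L : set Y) : compact L -> orbit_bounded L.
Proof.
move=> cL; apply: (compact_local_ind orbit_boundedS orbit_boundedU orbit_bounded0 cL).
move=> y _; have [a [_ [x _ <-] <-]] := act_iota_cover He y.
have [V Vx cV] := locally_compact_nbhs HLC x.
exists (th a @` (iota @` V)); first exact: (nbhs_act_iota_image Hg He).
exact: orbit_bounded_act_image.
Qed.

Lemma measurable_orbit_sqr (F : Y -> Cplx R) (y : Y) : continuous F ->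
  measurable_fun setT (fun t : borelG G => nc (F (th (inv t) y)) ^+ 2).
Proof.
move=> cF; apply: borelG_measurable_fun => t.
apply: (@continuous_comp _ _ _ (fun t => nc (F (th (inv t) y))) (fun r : R => r ^+ 2)).
  apply: continuous_normc.
  apply: (@continuous_comp _ _ _ (fun t => th (inv t) y) F); last exact: cF.
  exact: (continuous_orbit_inv Hg Ha).
exact: exprn_continuous.
Qed.

Lemma Enorm2_sub_truncate_le (g h : Y -> Cplx R) (c B : R) : 0 < c ->
  continuous g -> continuous h -> orbit_bounded_by B [set y | h y != 0] ->
  (Enorm2 inv mu th (fun y => (g y - truncate c h y)%R) <=
   2%:E * Enorm2 inv mu th (fun y => (g y - h y)%R) + (8 * c ^+ 2 * B)%:E)%E.
Proof.
move=> c0 cg ch hB; apply: ge_ereal_sup => _ [y _ <-].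
have [M [mM muM hM]] := hB y.
have cgh : continuous (fun z => g z - h z).
  by move=> z; apply: cvgB; [exact: cg | exact: ch].
have cgk : continuous (fun z => g z - truncate c h z).
  by move=> z; apply: cvgB; [exact: cg | exact: continuous_truncate].
apply: (@le_trans _ _ (2%:E * \int[mu]_(t in setT)
    (nc (g (th (inv t) y) - h (th (inv t) y)) ^+ 2)%:E + (8 * c ^+ 2)%:E * mu M)%E).
  apply: integral_le_affine_indic => //.
  - by rewrite mulr_ge0 ?sqr_ge0.
  - exact: measurable_orbit_sqr cgk.
  - exact: measurable_orbit_sqr cgh.
  - by move=> t; rewrite sqr_ge0.
  - by move=> t; rewrite sqr_ge0.
  move=> t; apply: (sqr_normc_sub_truncate_le c0); first by rewrite /indic ler0n.
  by move=> /hM Mt; rewrite /indic mem_set.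
apply: leeD.
  by apply: lee_wpmul2l => //; apply: ereal_sup_ubound; exists y.
rewrite [X in (_ <= X)%E]EFinM; apply: lee_wpmul2l => //.
by rewrite lee_fin mulr_ge0 ?sqr_ge0.
Qed.

Lemma E0_approx_CcX (g h : Y -> Cplx R) (e : R) : 0 < e -> continuous g -> E0 iota h ->
  (Enorm2 inv mu th (fun y => (g y - h y)%R) < (e / 4)%:E)%E ->
  exists2 k, CcX_in iota k & (Enorm2 inv mu th (fun y => (g y - k y)%R) < e%:E)%E.
Proof.
move=> e0 cg hE0 gh; have [[ch cL] _] := hE0.
have [B B0 hB] := orbit_bounded_compact cL.
(* c <= 1 and 16 c (B + 1) <= e give 8 c^2 B <= e / 2. *)
pose c := Num.min 1 (e / (16 * (B + 1))).
have c0 : 0 < c by rewrite lt_min ltr01 /= divr_gt0 // mulr_gt0 //; lra.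
have cB : 8 * c ^+ 2 * B <= e / 2.
  have c1 : c <= 1 by rewrite ge_min lexx.
  have ce : c * (16 * (B + 1)) <= e.
    by rewrite -ler_pdivlMr ?ge_min ?lexx ?orbT // mulr_gt0 //; lra.
  have := mulr_ge0 (ltW c0) B0; nra.
exists (truncate c h); first exact: truncate_CcX c0 hE0.
have hB' := orbit_bounded_byS (@subset_closure _ _) hB.
apply: le_lt_trans (Enorm2_sub_truncate_le c0 cg ch hB') _.
move: gh; case: (Enorm2 _ _ _ _) => [r||] //=.
  by rewrite !lte_fin => hr; lra.
by move=> _; rewrite gt0_muleNy ?addNye ?ltNyr.
Qed.

End haar_estimates.

Unset Implicit Arguments.
Set Strict Implicit.
Set Printing Implicit Defensive.

Theorem proposition3p1 (R : realType)
  (G : ptopologicalType) (mul : G -> G -> G) (inv : G -> G) (one : G)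
  (mu : {measure set (borelG G) -> \bar R})
  (X : topologicalType) (D : G -> set X) (s : G -> X -> X)
  (Y : topologicalType) (th : G -> Y -> Y) (iota : X -> Y) :
  is_topgroup mul inv one -> hausdorff_space G -> locally_compact [set: G] ->
  is_left_Haar mul mu ->
  hausdorff_space X -> locally_compact [set: X] ->
  is_partial_action mul inv one D s -> proper_partial_action inv D s ->
  is_enveloping_action mul inv one D s th iota ->
  (* closure of C_c(X) = closure of E^0_sigma, inside E_{sigma^e} *)
  (forall g : Y -> Cplx R, Cc g ->
     in_Eclosure inv mu th (CcX_in iota) g <-> in_Eclosure inv mu th (E0 iota) g).
Proof.
move=> Hg HG _ HH HX HLC Hpa Hpr He g [cg _]; split => gcl e e0.
  have [h hCcX gh] := gcl e e0.
  by exists h => //; exact: (CcX_in_E0 Hg Hpa He HG HX HLC Hpr).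
have [h hE0 gh] := gcl (e / 4) (divr_gt0 e0 (ltr0Sn _ 3)).
exact: (E0_approx_CcX Hg Hpa He HG HLC Hpr HH e0 cg hE0 gh).
Qed.
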